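(* Let $X$ be a CLP-compact (Hausdorff) space with a dense discrete subspace $Y$, and let $Z\subset X$ be a set with $Z\setminus Y$ finite. Then the closure $\overline{Z}$ of $Z$ in $X$ is countably compact at $Z$. Moreover, if $\overline{Z}\setminus Z$ is compact, then $\overline{Z}$ is compact.
   Context: A space is CLP-compact if every cover by clopen sets has a finite subcover. A space $W$ is countably compact at a subset $A\subset W$ if every infinite subset $B\subset A$ has an accumulation point in $W$. *)

From HB Require Import structures.
From mathcomp Require Import all_boot all_order all_algebra.
From mathcomp Require Import all_classical all_reals all_analysis.
Set Implicit Arguments. Unset Strict Implicit. Unset Printing Implicit Defensive.
Local Open Scope classical_set_scope.

Definition CLP_compact (X : topologicalType) : Prop :=
  forall C : set (set X),
    (forall A, C A -> clopen A) ->
    \bigcup_(A in C) A = setT ->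
    exists F : set (set X),
      [/\ finite_set F, F `<=` C & \bigcup_(A in F) A = setT].

Definition discrete_subspace (X : topologicalType) (Y : set X) : Prop :=
  forall y, Y y -> exists U : set X, open U /\ U `&` Y = [set y].

Definition countably_compact_at (X : topologicalType) (W A : set X) : Prop :=
  forall B : set X, B `<=` A -> infinite_set B ->
    exists x, W x /\ limit_point B x.

From HB Require Import structures.
From mathcomp Require Import all_boot all_order all_algebra.
From mathcomp Require Import all_classical all_reals all_analysis.
Local Open Scope classical_set_scope.

(* Since X is T1 and Y is dense and discrete, every point of Y is isolated
   in X.  In a CLP-compact T1 space a closed set S of isolated points is
   finite: ~` S and the singletons of S form a clopen cover of X.  So an
   infinite B included in Z, which meets Y in an infinite set, has a limit
   point, necessarily in the closure of Z.  For compactness, a proper filter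
   on closure Z either clusters in the compact set
   K = (closure Z `\` Z) `|` (Z `\` Y), or some member B of it has a closure
   missing K; then closure Z `&` closure B is a closed subset of Y, hence
   finite, and the filter clusters there. *)

Lemma compact_filter_avoid_closure (T : topologicalType) (K : set T)
    (F : set_system T) :
  ProperFilter F -> compact K -> K `&` cluster F = set0 ->
  exists2 B, F B & K `&` closure B = set0.
Proof.
move=> PF cK KF0; apply: contrapT => noB.
pose G := filter_from F (fun B => K `&` closure B).
have FG : Filter G.
  apply: filter_from_filter; first by exists setT; exact: filterT.
  move=> A B FA FB; exists (A `&` B); first exact: filterI.
  by move=> x [Kx /closureI[]].
have PG : ProperFilter G.
  apply: filter_from_proper => B FB; apply/set0P/eqP => KB0.
  by apply: noB; exists B.
have GK : G K by exists setT; [exact: filterT|exact: subIsetl].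
have [p [Kp Gp]] := cK G PG GK.
suff : (K `&` cluster F) p by rewrite KF0.
split=> //; rewrite clusterE => B FB; apply: closed_closure => U pU.
have [x [[_ clBx] Ux]] : (K `&` closure B) `&` U !=set0.
  by apply: Gp pU; exists B.
by exists x.
Qed.

Lemma CLP_compact_closed_isolated_finite (X : topologicalType) (S : set X) :
  CLP_compact X -> accessible_space X -> closed S ->
  (forall s, S s -> open [set s]) -> finite_set S.
Proof.
move=> clpX accX cS isoS.
have oS : open S.
  have -> : S = \bigcup_(s in S) [set s].
    by apply/seteqP; split=> [x Sx|x [s Ss ->]] //; exists x.
  exact: bigcup_open.
pose C := [set ~` S] `|` [set [set s] | s in S].
have [F [finF FC covF]] : exists F : set (set X),
    [/\ finite_set F, F `<=` C & \bigcup_(A in F) A = setT].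
  apply: clpX.
    move=> A [->|[s Ss <-]]; split.
    - by rewrite openC.
    - by rewrite closedC.
    - exact: isoS.
    - exact: accessible_closed_set1.
  apply/seteqP; split=> // x _; have [Sx|nSx] := pselect (S x).
    by exists [set x] => //; right; exists x.
  by exists (~` S) => //; left.
apply: (sub_finite_set (B := \bigcup_(A in F) (A `&` S))).
  move=> s Ss; have : (\bigcup_(A in F) A) s by rewrite covF.
  by case=> A FA As; exists A.
apply: bigcup_finite => // A /FC[->|[s _ <-]].
  by rewrite setICl; exact: finite_set0.
by apply: finite_setIl; exact: finite_set1.
Qed.

Section DenseDiscrete.
Variables (X : topologicalType) (Y : set X).
Hypotheses (accX : accessible_space X) (clpX : CLP_compact X)
  (denseY : dense Y) (discY : discrete_subspace Y).

Lemma dense_discrete_open_set1 y : Y y -> open [set y].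
Proof.
move=> Yy; have [U [oU UY]] := discY y Yy.
have [Uy _] : (U `&` Y) y by rewrite UY.
suff -> : [set y] = U by [].
apply/seteqP; split=> [x -> //|x Ux]; apply: contrapT => xy.
have oUy : open (U `&` ~` [set y]).
  by apply: openI oU _; exact/closed_openC/accessible_closed_set1.
have [z [[Uz zy] Yz]] := denseY _ (ex_intro _ x (conj Ux xy)) oUy.
by apply: zy; rewrite -UY.
Qed.

Lemma closed_subset_finite S : closed S -> S `<=` Y -> finite_set S.
Proof.
move=> cS SY; apply: CLP_compact_closed_isolated_finite => // s /SY.
exact: dense_discrete_open_set1.
Qed.

Lemma infinite_subset_limit_point S :
  S `<=` Y -> infinite_set S -> limit_point S !=set0.
Proof.
move=> SY infS; apply/set0P/eqP => noLim; apply/infS/closed_subset_finite => //.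
by rewrite /closed closure_isolated_limit_point noLim setU0; exact: isolatedS.
Qed.

Variables (Z : set X).
Hypothesis finZY : finite_set (Z `\` Y).

Lemma closure_countably_compact_at : countably_compact_at (closure Z) Z.
Proof.
move=> B BZ infB.
have infBY : infinite_set (B `&` Y).
  apply: contra_not infB => finBY.
  apply: (sub_finite_set (B := (B `&` Y) `|` (Z `\` Y))).
    move=> x Bx; have [Yx|nYx] := pselect (Y x); first by left.
    by right; split; first exact: BZ.
  by rewrite finite_setU.
have [x Lx] := infinite_subset_limit_point _ (@subIsetr _ B Y) infBY.
exists x; split.
  apply: (closureS BZ); apply: (closureS (@subIsetl _ B Y)).
  exact: subset_limit_point.
by move=> U /Lx[y [yx [By _] Uy]]; exists y.
Qed.

Lemma closure_compact : compact (closure Z `\` Z) -> compact (closure Z).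
Proof.
move=> cZZ F PF FZ.
pose K := (closure Z `\` Z) `|` (Z `\` Y).
have KZ : K `<=` closure Z by move=> x [[]//|[Zx _]]; exact: subset_closure.
have cK : compact K by apply: compactU => //; exact: finite_compact.
have [KF0|/set0P[x [Kx Fx]]] := eqVneq (K `&` cluster F) set0; last first.
  by exists x; split => //; exact: KZ.
have [B FB KB0] := compact_filter_avoid_closure _ _ _ PF cK KF0.
have SY : closure Z `&` closure B `<=` Y.
  move=> x [clZx clBx]; apply: contrapT => nYx.
  suff : (K `&` closure B) x by rewrite KB0.
  by split=> //; have [Zx|nZx] := pselect (Z x); [right|left].
have cS : closed (closure Z `&` closure B).
  by apply: closedI; exact: closed_closure.
have finS := closed_subset_finite _ cS SY.
have FS : F (closure Z `&` closure B).
  by apply: filterI FZ _; exact: filterS (@subset_closure _ B) FB.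
have [x [[clZx _] Fx]] := finite_compact finS PF FS.
by exists x.
Qed.

End DenseDiscrete.

Theorem lemma2p1 (X : topologicalType) (hX : hausdorff_space X)
  (clpX : CLP_compact X) (Y : set X) (denseY : dense Y)
  (discY : discrete_subspace Y) (Z : set X)
  (finZY : finite_set (Z `\` Y)) :
  countably_compact_at (closure Z) Z /\
  (compact (closure Z `\` Z) -> compact (closure Z)).
Proof.
have accX := hausdorff_accessible hX.
by split; [apply: (@closure_countably_compact_at _ Y)
          |apply: (@closure_compact _ Y)].
Qed.
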